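(* For integers $1\le k\le l$, the element $g_{l,k-1}$ divides $\{k-1\}_q!$, and there is an equality of ideals of $\mathbb{Z}[q,q^{-1}]$ $$\Big(\{l-k+1\}_q,\ \{k\}_q\,\frac{\{k-1\}_q!}{g_{l,k-1}}\Big)=\big(\tilde g_{l,k}\big),\qquad\text{where } \tilde g_{l,k}=\prod_{\substack{m\mid l-k+1\\ 1\le m\le k}}\Phi_m .$$
   Context: In $\mathbb{Z}[q,q^{-1}]$ set $\{i\}_q=q^i-1$, $\{i\}_{q,n}=\{i\}_q\cdots\{i-n+1\}_q$ (equal to $1$ for $n=0$), $\{n\}_q!=\{n\}_{q,n}$. For $0\le i\le k\le l$ set $h_{l,k,i}=\{l-i\}_{q,k-i}\{i\}_q!$ and $g_{l,k}=\mathrm{GCD}(h_{l,k,0},\dots,h_{l,k,k})$ (greatest common divisor in the UFD $\mathbb{Z}[q,q^{-1}]$, defined up to units $\pm q^j$). $(a,b)$ denotes the ideal generated by $a,b$. $\Phi_m$ is the $m$th cyclotomic polynomial. *)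

From HB Require Import structures.
From mathcomp Require Import all_boot all_order all_algebra all_field.
Set Implicit Arguments. Unset Strict Implicit. Unset Printing Implicit Defensive.
Import GRing.Theory.
Local Open Scope ring_scope.

(* ---------- The ring Z[q, q^-1] ----------
   An element of Z[q,q^-1] is represented by a pair (p, n) with
   p : {poly int} (the variable 'X plays the role of q), standing for q^(-n) * p.
   Every Laurent polynomial has such a representation. *)
Definition laurent := ({poly int} * nat)%type.

Definition lpoly (p : {poly int}) : laurent := (p, 0%N).
Definition lmul (a b : laurent) : laurent := (a.1 * b.1, (a.2 + b.2)%N).
Definition ladd (a b : laurent) : laurent :=
  (a.1 * 'X^(b.2) + b.1 * 'X^(a.2), (a.2 + b.2)%N).
Definition leqL (a b : laurent) : Prop := a.1 * 'X^(b.2) = b.1 * 'X^(a.2).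
Definition ldvd (d a : laurent) : Prop := exists u : laurent, leqL a (lmul u d).
Definition lgcd (x : nat -> laurent) (n : nat) (g : laurent) : Prop :=
  (forall i, (i <= n)%N -> ldvd g (x i)) /\
  (forall d, (forall i, (i <= n)%N -> ldvd d (x i)) -> ldvd d g).
Definition ideal2_eq_principal (a b c : laurent) : Prop :=
  forall x : laurent,
    (exists y z : laurent, leqL x (ladd (lmul y a) (lmul z b))) <->
    (exists w : laurent, leqL x (lmul w c)).

Definition qnum (i : nat) : {poly int} := 'X^i - 1.
Definition qfall (i n : nat) : {poly int} := \prod_(j < n) qnum (i - j).
Definition qfact (n : nat) : {poly int} := qfall n n.
Definition hq (l k i : nat) : {poly int} := qfall (l - i) (k - i) * qfact i.
Definition gtilde (l k : nat) : {poly int} :=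
  \prod_(1 <= m < k.+1 | (m %| (l - k).+1)%N) 'Phi_m.

From HB Require Import structures.
From mathcomp Require Import all_boot all_order all_algebra all_field.
From mathcomp Require Import fraction ring zify.
Import GRing.Theory.
Local Open Scope ring_scope.

(* Every polynomial in sight is, up to a power of q, a product of "atoms": q and
   the cyclotomic polynomials Phi_m, since {j}_q = prod_{m | j} Phi_m.  Such a
   product is encoded by an exponent vector e (aprod M e = prod_{m<M} atom m^(e m)),
   and the proof is bookkeeping with these vectors:
   - Z[q,q^-1] embeds in the fraction field of Z[q] (lfrac); equality,
     divisibility and ideal membership of Laurent polynomials are read there.
   - h_{l,K,i} = aprod (hexp l K i); for m | l-K the exponent of Phi_m in it is
     floor((K-i)/m) + floor(i/m).
   - The atoms are pairwise coprime over Q, so a common divisor of the h_{l,K,i}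
     divides the product with the pointwise minimal exponents; as h_{l,K,0} is
     monic, Gauss' lemma brings this back to Z[q].  Hence that product is a gcd.
   - Two Phi_a, Phi_b with a | n, a > b, b not dividing n generate the unit ideal
     of Z[q] (Euclid's algorithm on geometric sums).
   - With K = k-1 and n = l-k+1: {n}_q = gtilde * A and {k}_q {K}_q!/gcd =
     gtilde * B, where A and B only involve atoms of the two kinds above, hence
     are comaximal; this yields the equality of ideals. *)

Notation Lfrac := {fraction {poly int}}.
Notation "x %:F" := (@FracField.tofrac _ x).

Definition lfrac (a : laurent) : Lfrac := (a.1)%:F / ('X^(a.2))%:F.

Lemma tofracXn_neq0 n : ('X^n : {poly int})%:F != 0 :> Lfrac.
Proof. by rewrite tofrac_eq0 monic_neq0 ?monicXn. Qed.

Lemma leqL_lfrac a b : leqL a b <-> lfrac a = lfrac b.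
Proof.
rewrite /leqL /lfrac; split=> [h|/eqP].
  by apply/eqP; rewrite eqr_div ?tofracXn_neq0 // -!tofracM h.
by rewrite eqr_div ?tofracXn_neq0 // -!tofracM tofrac_eq => /eqP.
Qed.

Lemma lfrac_mul a b : lfrac (lmul a b) = lfrac a * lfrac b.
Proof. by rewrite /lfrac /lmul /= exprD !tofracM invfM mulrACA. Qed.

Lemma add_fractions (F : fieldType) (x y A B : F) : A != 0 -> B != 0 ->
  (x * B + y * A) * (A^-1 * B^-1) = x / A + y / B.
Proof. by move=> hA hB; field; rewrite hA hB. Qed.

Lemma lfrac_add a b : lfrac (ladd a b) = lfrac a + lfrac b.
Proof.
rewrite /lfrac /ladd /= exprD !tofracM tofracD !tofracM invfM.
exact: add_fractions (tofracXn_neq0 a.2) (tofracXn_neq0 b.2).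
Qed.

Lemma lfrac_lpoly p : lfrac (lpoly p) = p%:F.
Proof. by rewrite /lfrac /= expr0 tofrac1 invr1 mulr1. Qed.

Lemma ldvd_lfrac d a : ldvd d a <-> exists u, lfrac a = lfrac u * lfrac d.
Proof.
split=> [[u /leqL_lfrac]|[u h]]; first by rewrite lfrac_mul; exists u.
by exists u; apply/leqL_lfrac; rewrite lfrac_mul.
Qed.

Lemma lgcd_associates {x n g g'} : lgcd x n g -> lgcd x n g' -> lfrac g' != 0 ->
  exists u u', lfrac g = lfrac u * lfrac g' /\ lfrac u * lfrac u' = 1.
Proof.
move=> [gx gmax] [g'x g'max] g'0.
have [u hu] := (ldvd_lfrac _ _).1 (g'max g gx).
have [u' hu'] := (ldvd_lfrac _ _).1 (gmax g' g'x).
exists u', u; split=> //; apply: (mulIf g'0).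
by rewrite mul1r [lfrac u' * _]mulrC -mulrA -hu' -hu.
Qed.

Definition atom (m : nat) : {poly int} := if m is 0 then 'X else 'Phi_m.

Definition aprod (M : nat) (e : nat -> nat) : {poly int} := \prod_(m < M) atom m ^+ e m.

Lemma atom_monic m : atom m \is monic.
Proof. by case: m => [|m]; rewrite /atom ?monicX ?Cyclotomic_monic. Qed.

Lemma aprod_monic M e : aprod M e \is monic.
Proof. by apply: monic_prod => i _; apply/monic_exp/atom_monic. Qed.

Lemma aprod_neq0 M e : aprod M e != 0.
Proof. exact/monic_neq0/aprod_monic. Qed.

Lemma aprod_ext M e1 e2 :
  (forall m, (m < M)%N -> e1 m = e2 m) -> aprod M e1 = aprod M e2.
Proof. by move=> h; apply: eq_bigr => i _; rewrite h. Qed.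

Lemma aprod_add M e1 e2 : aprod M (fun m => e1 m + e2 m)%N = aprod M e1 * aprod M e2.
Proof. by rewrite /aprod -big_split; apply: eq_bigr => i _; rewrite exprD. Qed.

Lemma aprod_split M e1 e2 : (forall m, (m < M)%N -> e1 m <= e2 m)%N ->
  aprod M e2 = aprod M e1 * aprod M (fun m => e2 m - e1 m)%N.
Proof.
by move=> h; rewrite -aprod_add; apply: aprod_ext => m hm; rewrite subnKC ?h.
Qed.

Lemma aprod_sum M I (r : seq I) (e : I -> nat -> nat) :
  \prod_(i <- r) aprod M (e i) = aprod M (fun m => \sum_(i <- r) e i m)%N.
Proof.
by rewrite /aprod exchange_big /=; apply: eq_bigr => m _; rewrite prodrXr.
Qed.

Lemma aprod_factor M e a : (a < M)%N -> (0 < e a)%N ->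
  exists r, aprod M e = atom a * r.
Proof.
move=> aM ea; rewrite /aprod (bigD1 (Ordinal aM)) //=.
exists (atom a ^+ (e a).-1 * \prod_(i < M | i != Ordinal aM) atom i ^+ e i).
by rewrite mulrA -exprS prednK.
Qed.

Lemma aprod_point M a r : (a < M)%N ->
  aprod M (fun m => if m == a then r else 0%N) = atom a ^+ r.
Proof.
move=> aM; rewrite /aprod (bigD1 (Ordinal aM)) //= eqxx big1 ?mulr1 //.
move=> i ne; have -> : (nat_of_ord i == a) = false.
  by apply/negbTE; apply: contra ne => /eqP e; apply/eqP/val_inj.
by rewrite expr0.
Qed.

Definition shiftexp (N : nat) (e : nat -> nat) (m : nat) : nat :=
  if m == 0%N then N else e m.

Lemma aprod_shift M N e : (0 < M)%N -> e 0%N = 0%N ->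
  aprod M (shiftexp N e) = 'X^N * aprod M e.
Proof.
move=> M0 e0.
rewrite (@aprod_ext M _ (fun m => (if m == 0%N then N else 0%N) + e m)%N).
  by rewrite aprod_add aprod_point.
by move=> m _; rewrite /shiftexp; case: eqP => [->|]; rewrite ?e0 ?addn0.
Qed.

(* dvdexp j m is the exponent of Phi_m in q^j - 1 = prod_{m | j} Phi_m. *)
Definition dvdexp (j m : nat) : nat := ((0 < m) && (m %| j))%N.

Lemma Xn_sub1_aprod M j : (0 < j)%N -> (j < M)%N -> 'X^j - 1 = aprod M (dvdexp j).
Proof.
move=> j0 jM; rewrite -prod_Cyclotomic //.
have -> : aprod M (dvdexp j) = \prod_(m < M | ((0 < m) && (m %| j))%N) 'Phi_m.
  rewrite /aprod [RHS]big_mkcond /=; apply: eq_bigr => i _.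
  rewrite /dvdexp; case h: ((0 < i) && (i %| j))%N; last by rewrite expr0.
  by move/andP: h => [i0 _]; rewrite expr1 /atom; case: (nat_of_ord i) i0.
rewrite -(big_mkord (fun m => (0 < m) && (m %| j))%N) -[RHS]big_filter.
apply: perm_big; apply: uniq_perm; rewrite ?divisors_uniq ?filter_uniq ?iota_uniq //.
move=> d; rewrite mem_filter /index_iota subn0 mem_iota -dvdn_divisors // add0n.
case dj: (d %| j)%N; last by rewrite andbF.
have := dvdn_leq j0 dj; rewrite (dvdn_gt0 j0 dj) /= => dj'.
by rewrite (leq_ltn_trans dj' jM).
Qed.

Lemma qfall_aprod M a b : (b <= a)%N -> (a < M)%N ->
  qfall a b = aprod M (fun m => \sum_(t < b) dvdexp (a - t) m)%N.
Proof.
move=> ba aM; rewrite /qfall -aprod_sum; apply: eq_bigr => t _.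
rewrite /qnum (@Xn_sub1_aprod M) //; first by rewrite subn_gt0 (leq_trans (ltn_ord t)).
exact: leq_ltn_trans (leq_subr _ _) aM.
Qed.

Lemma sum_dvdexp m a : (0 < m)%N -> (\sum_(t < a) dvdexp (a - t) m)%N = (a %/ m)%N.
Proof.
move=> m0; elim: a => [|a IH]; first by rewrite big_ord0 div0n.
rewrite big_ord_recl subn0 /=.
under eq_bigr => t _ do rewrite /bump /= add1n subSS.
by rewrite IH divnS // /dvdexp m0.
Qed.

Definition hexp (l K i m : nat) : nat :=
  (\sum_(t < K - i) dvdexp (l - i - t) m + \sum_(t < i) dvdexp (i - t) m)%N.

Lemma hq_aprod l K i : (K <= l)%N -> (i <= K)%N -> hq l K i = aprod l.+1 (hexp l K i).
Proof.
move=> Kl iK; rewrite /hq /qfact /hexp aprod_add.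
rewrite (@qfall_aprod l.+1 (l - i)) ?(@qfall_aprod l.+1 i) //.
- by rewrite ltnS (leq_trans iK).
- exact: leq_sub2r.
- by rewrite ltnS leq_subr.
Qed.

Lemma hqK l K : hq l K K = qfact K.
Proof. by rewrite /hq subnn /qfall big_ord0 mul1r. Qed.

Lemma hexp0 l K i : hexp l K i 0 = 0%N.
Proof. by rewrite /hexp !big1. Qed.

Lemma hexp_dvd l K i m n : (0 < m)%N -> (m %| n)%N -> l = (n + K)%N -> (i <= K)%N ->
  hexp l K i m = ((K - i) %/ m + i %/ m)%N.
Proof.
move=> m0 mn -> iK; rewrite /hexp (sum_dvdexp _ _ m0); congr (_ + _)%N.
rewrite -(sum_dvdexp _ _ m0); apply: eq_bigr => t _.
rewrite /dvdexp -addnBA // -addnBA; last exact: ltnW (ltn_ord t).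
by rewrite dvdn_addr.
Qed.

Definition gexp (k n m : nat) : nat := [&& (0 < m), (m <= k) & (m %| n)]%N.

Lemma gtilde_aprod l k : (k <= l)%N -> gtilde l k = aprod l.+1 (gexp k (l - k).+1).
Proof.
move=> kl.
have -> : aprod l.+1 (gexp k (l - k).+1) =
          \prod_(m < l.+1 | gexp k (l - k).+1 m != 0%N) 'Phi_m.
  rewrite /aprod [RHS]big_mkcond /=; apply: eq_bigr => i _.
  rewrite /gexp; case h: [&& (0 < i), (i <= k) & (i %| (l - k).+1)]%N; last by rewrite expr0.
  by move/and3P: h => [i0 _ _]; rewrite expr1 /atom; case: (nat_of_ord i) i0.
rewrite -(big_mkord (fun m => gexp k (l - k).+1 m != 0%N)) -[RHS]big_filter.
rewrite /gtilde -big_filter.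
apply: perm_big; apply: uniq_perm; rewrite ?filter_uniq ?iota_uniq //.
move=> d; rewrite !mem_filter /index_iota !mem_iota subn0 add0n subn1 /= add1n ltnS /gexp.
case: (d %| (l - k).+1)%N; rewrite ?andbF ?andbT //=.
case: (0 < d)%N => //=; case dk: (d <= k)%N => //=.
by rewrite ltnS (leq_trans dk).
Qed.

Section CoprimeProducts.
Variables (F : fieldType) (M : nat) (p : nat -> {poly F}).
Hypothesis p_coprime :
  forall a b, (a < M)%N -> (b < M)%N -> a != b -> coprimep (p a) (p b).

Definition powprod (e : nat -> nat) : {poly F} := \prod_(m < M) p m ^+ e m.

Lemma powprod_split e1 e2 : (forall m, (m < M)%N -> e1 m <= e2 m)%N ->
  powprod e2 = powprod e1 * powprod (fun m => e2 m - e1 m)%N.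
Proof.
move=> h; rewrite /powprod -big_split; apply: eq_bigr => m _ /=.
by rewrite -exprD subnKC ?h.
Qed.

Lemma powprod_coprime e1 e2 : (forall m, (m < M)%N -> e1 m = 0%N \/ e2 m = 0%N) ->
  coprimep (powprod e1) (powprod e2).
Proof.
move=> h; rewrite /powprod; apply: (big_ind (fun z => coprimep z _)); first exact: coprime1p.
  by move=> x y hx hy; rewrite coprimepMl hx hy.
move=> a _; have [->|ea0] := eqVneq (e1 a) 0%N; first by rewrite expr0 coprime1p.
apply: coprimep_expl; apply: (big_ind (fun z => coprimep _ z)); first exact: coprimep1.
  by move=> x y hx hy; rewrite coprimepMr hx hy.
move=> b _; have [->|eb0] := eqVneq (e2 b) 0%N; first by rewrite expr0 coprimep1.
apply/coprimep_expr/p_coprime => //; apply/negP => /eqP /val_inj ab; subst b.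
by case: (h a (ltn_ord a)) => hh; [move: ea0 | move: eb0]; rewrite hh.
Qed.

Lemma dvdp_coprime_cancel (d c x y : {poly F}) :
  coprimep x y -> d %| c * x -> d %| c * y -> d %| c.
Proof.
move=> /Bezout_eq1_coprimepP [[u v] /= h] hx hy.
have -> : c = u * (c * x) + v * (c * y).
  by rewrite !mulrA ![_ * c]mulrC -!mulrA -mulrDr h mulr1.
by rewrite dvdp_add // dvdp_mull.
Qed.

Lemma dvdp_powprod_min d e1 e2 : d %| powprod e1 -> d %| powprod e2 ->
  d %| powprod (fun m => minn (e1 m) (e2 m)).
Proof.
set e := fun m => minn (e1 m) (e2 m).
rewrite (@powprod_split e e1) => [h1|m _]; last exact: geq_minl.
rewrite (@powprod_split e e2) => [h2|m _]; last exact: geq_minr.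
apply: dvdp_coprime_cancel h1 h2; apply: powprod_coprime => m _.
by rewrite /e; case: (leqP (e1 m) (e2 m)) => h; [left | right]; rewrite subnn.
Qed.

End CoprimeProducts.

Local Notation ratp := (map_poly (intr : int -> rat)).

Lemma ratp_aprod M e : ratp (aprod M e) = powprod _ M (fun m => ratp (atom m)) e.
Proof. by rewrite rmorph_prod; apply: eq_bigr => i _; rewrite rmorphXn. Qed.

Lemma atom_dvd_Xn_sub1 {b : nat} : (0 < b)%N -> exists r, 'X^b - 1 = atom b * r.
Proof.
move=> b0; rewrite (@Xn_sub1_aprod b.+1 b) //; apply: aprod_factor => //.
by rewrite /dvdexp b0 dvdnn.
Qed.

(* The atoms are pairwise coprime over Q: Phi_a and Phi_b both divide the
   separable polynomial q^(ab) - 1, and q does not divide q^b - 1. *)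
Lemma atom_coprime {a b : nat} : a != b -> coprimep (ratp (atom a)) (ratp (atom b)).
Proof.
wlog ab : a b / (a < b)%N.
  move=> W ne; case: (ltngtP a b) => h; first exact: W.
    by rewrite coprimep_sym; apply: W => //; rewrite eq_sym.
  by move: ne; rewrite h eqxx.
have b0 : (0 < b)%N by rewrite (leq_ltn_trans _ ab).
move=> ne; have [a0|a0] := posnP a.
  have [r e] := atom_dvd_Xn_sub1 b0.
  apply: (@coprimep_dvdl _ (ratp ('X^b - 1))); first by rewrite e rmorphM dvdp_mulr.
  rewrite a0 /atom map_polyX coprimep_sym coprimepX rmorphB rmorph1 /= map_polyXn.
  by rewrite /root !hornerE expr0n eqn0Ngt b0.
set N := (a * b)%N.
have N0 : (0 < N)%N by rewrite muln_gt0 a0.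
have e : 'X^N - 1 = atom a * atom b * aprod N.+1 (fun m => dvdexp N m -
     ((if m == a then 1 else 0) + (if m == b then 1 else 0)))%N.
  have ea := @aprod_point N.+1 a 1 (leq_pmulr _ b0).
  have eb := @aprod_point N.+1 b 1 (leq_pmull _ a0).
  rewrite !expr1 in ea eb.
  rewrite (@Xn_sub1_aprod N.+1 N) // -ea -eb -aprod_add -aprod_split // => m _.
  rewrite /dvdexp; case: (eqVneq m a) => [->|ma]; first by rewrite (negbTE ne) a0 dvdn_mulr.
  by case: (eqVneq m b) => [->|mb] //=; rewrite b0 dvdn_mull.
apply: (@separable_coprime _ (ratp ('X^N - 1))).
  rewrite rmorphB rmorph1 /= map_polyXn; apply: separable_Xn_sub_1.
  by rewrite Num.Theory.pnatr_eq0 -lt0n.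
by rewrite e !rmorphM /= dvdp_mulr.
Qed.

(* A divisor of a monic polynomial is primitive up to sign, so divisibility
   by it over Q already holds over Z. *)
Lemma dvdp_int_of_monic_multiple {d w p : {poly int}} :
  d * w \is monic -> ratp d %| ratp p -> exists r, p = d * r.
Proof.
move=> mon; rewrite dvdp_rat_int => /dvdpP_int [r ->].
have : (zcontents d == 1) || (zcontents d == -1).
  have := @intUnitRing.unitzPl (zcontents d) (zcontents w); rewrite qualifE; apply.
  by rewrite mulrC -zcontentsM zcontents_monic.
case/orP => /eqP c; [exists r | exists (- r)];
  by rewrite [in RHS](zpolyEprim d) c ?scale1r // scaleN1r mulrNN.
Qed.

Fixpoint minexp (f : nat -> nat -> nat) (j m : nat) : nat :=
  if j is j'.+1 then minn (minexp f j' m) (f j m) else f 0%N m.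

Lemma minexp_le f j i m : (i <= j)%N -> (minexp f j m <= f i m)%N.
Proof.
elim: j => [|j IH] /=; first by rewrite leqn0 => /eqP ->.
rewrite leq_eqVlt ltnS => /orP [/eqP ->|h]; first by rewrite geq_minr.
exact: leq_trans (geq_minl _ _) (IH h).
Qed.

Lemma minexp_ge f j m L :
  (forall i, (i <= j)%N -> (L <= f i m)%N) -> (L <= minexp f j m)%N.
Proof.
elim: j => [|j IH] h /=; first exact: h.
by rewrite leq_min IH ?h // => i hi; apply: h; apply: leq_trans hi _.
Qed.

Lemma ldvd_lpoly_int d p : ldvd d (lpoly p) -> exists N w, 'X^N * p = d.1 * w.
Proof.
move=> [u]; rewrite /leqL /lmul /= expr0 mulr1 => e.
by exists (u.2 + d.2)%N, u.1; rewrite mulrC e mulrC.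
Qed.

Section HGcd.
Variables l K : nat.
Hypothesis Kl : (K <= l)%N.
Local Notation E := (hexp l K).

Definition hgcd : {poly int} := aprod l.+1 (minexp E K).

Lemma minexp0 j : minexp E j 0%N = 0%N.
Proof. by have := minexp_le E j 0 0 (leq0n j); rewrite hexp0 leqn0 => /eqP. Qed.

Lemma common_divisor_dvd_minexp (d : {poly int}) :
  (forall i, (i <= K)%N -> exists N w, 'X^N * hq l K i = d * w) ->
  forall j, (j <= K)%N -> exists N, ratp d %| ratp (aprod l.+1 (shiftexp N (minexp E j))).
Proof.
move=> h; have hshift i N w : (i <= K)%N -> 'X^N * hq l K i = d * w ->
    ratp d %| ratp (aprod l.+1 (shiftexp N (E i))).
  by move=> iK e; rewrite aprod_shift ?hexp0 // -hq_aprod // e rmorphM dvdp_mulIl.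
elim=> [|j IH] jK.
  have [N [w e]] := h 0%N (leq0n _); exists N.
  by have := hshift _ _ _ (leq0n _) e; rewrite !aprod_shift ?minexp0 ?hexp0.
have [N1 h1] := IH (ltnW jK).
have [N2 [w e]] := h j.+1 jK.
have h2 := hshift _ _ _ jK e.
exists (minn N1 N2); rewrite ratp_aprod in h1; rewrite ratp_aprod in h2.
have := @dvdp_powprod_min _ _ _ (fun a b _ _ ab => atom_coprime ab) _ _ _ h1 h2.
rewrite -ratp_aprod (@aprod_ext _ _ (shiftexp (minn N1 N2) (minexp E j.+1))) //.
by move=> m _; rewrite /shiftexp /=; case: eqP.
Qed.

Lemma common_divisor_dvd_hgcd (d : laurent) :
  (forall i, (i <= K)%N -> ldvd d (lpoly (hq l K i))) -> ldvd d (lpoly hgcd).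
Proof.
move=> h; have {}h i : (i <= K)%N -> exists N w, 'X^N * hq l K i = d.1 * w.
  by move=> iK; apply/ldvd_lpoly_int/h.
have [N hN] := common_divisor_dvd_minexp _ h K (leqnn K).
rewrite aprod_shift ?minexp0 // in hN.
have [N0 [w0 e0]] := h 0%N (leq0n _).
have mon : d.1 * w0 \is monic by rewrite -e0 monicMl ?monicXn // hq_aprod // aprod_monic.
have [r er] := dvdp_int_of_monic_multiple mon hN.
exists (r * 'X^(d.2), N).
rewrite /leqL /lmul /lpoly /= expr0 mulr1 exprD mulrA [hgcd * _]mulrC er; ring.
Qed.

Lemma hq_lgcd : lgcd (fun i => lpoly (hq l K i)) K (lpoly hgcd).
Proof.
split=> [i iK|]; last exact: common_divisor_dvd_hgcd.
exists (lpoly (aprod l.+1 (fun m => E i m - minexp E K m)%N)).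
rewrite /leqL /lmul /lpoly /= hq_aprod // (@aprod_split _ (minexp E K) (E i)).
  by rewrite addn0 expr0 !mulr1 mulrC.
by move=> m _; apply: minexp_le.
Qed.

End HGcd.

Definition comaximal (a b : {poly int}) : Prop := exists u v, u * a + v * b = 1.

Lemma comaximal_sym {a b : {poly int}} : comaximal a b -> comaximal b a.
Proof. by move=> [u [v h]]; exists v, u; rewrite addrC. Qed.

Lemma comaximal1 a : comaximal a 1.
Proof. by exists 0, 1; rewrite mul0r add0r mulr1. Qed.

Lemma comaximalM a b1 b2 : comaximal a b1 -> comaximal a b2 -> comaximal a (b1 * b2).
Proof.
move=> [u1 [v1 h1]] [u2 [v2 h2]].
exists (u1 * u2 * a + u1 * v2 * b2 + v1 * b1 * u2), (v1 * v2).
by rewrite -[1]mulr1 -{1}h1 -h2; ring.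
Qed.

Lemma comaximal_dvdl {a b c r : {poly int}} : comaximal a b -> a = c * r -> comaximal c b.
Proof. by move=> [u [v h]] e; exists (u * r), v; rewrite -h e mulrA mulrAC. Qed.

Lemma comaximalX a b n : comaximal a b -> comaximal a (b ^+ n).
Proof.
move=> h; elim: n => [|n IH]; first by rewrite expr0; apply: comaximal1.
by rewrite exprS; apply: comaximalM.
Qed.

Lemma comaximal_prod a M (f : 'I_M -> {poly int}) :
  (forall i, comaximal a (f i)) -> comaximal a (\prod_(i < M) f i).
Proof.
move=> h; apply: (big_ind (comaximal a)); [exact: comaximal1 | exact: comaximalM |].
by move=> i _; apply: h.
Qed.

Lemma comaximal_aprod M ea eb :
  (forall a b, (0 < ea a)%N -> (0 < eb b)%N -> comaximal (atom a) (atom b)) ->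
  comaximal (aprod M ea) (aprod M eb).
Proof.
move=> h; apply/comaximal_sym/comaximal_prod => a.
have [->|hA] := posnP (ea a); first by rewrite expr0; apply: comaximal1.
apply/comaximalX/comaximal_sym/comaximal_prod => b.
have [->|hB] := posnP (eb b); first by rewrite expr0; apply: comaximal1.
exact/comaximalX/h.
Qed.

Definition geomsum (c s : nat) : {poly int} := \sum_(i < s) ('X^c) ^+ i.

Lemma geomsumE c s : 'X^(c * s) - 1 = ('X^c - 1) * geomsum c s.
Proof. by rewrite exprM subrX1. Qed.

Lemma Xn_sub1_neq0 {c : nat} : (0 < c)%N -> ('X^c - 1 : {poly int}) != 0.
Proof. by move=> c0; rewrite -polyC1 monic_neq0 // monicXnsubC. Qed.

Lemma geomsumD c s r : (0 < c)%N ->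
  geomsum c (s + r) = 'X^(c * r) * geomsum c s + geomsum c r.
Proof.
move=> c0; apply: (mulfI (Xn_sub1_neq0 c0)).
rewrite -geomsumE mulrDr mulrCA -!geomsumE mulnDr exprD.
by rewrite mulrBr mulr1 addrA subrK mulrC.
Qed.

Lemma geomsum1 c : geomsum c 1 = 1.
Proof. by rewrite /geomsum big_ord1 expr0. Qed.

(* Euclid's algorithm on the lengths: coprime lengths give comaximal sums. *)
Lemma comaximal_geomsum c s t : (0 < c)%N -> gcdn s t = 1%N ->
  comaximal (geomsum c s) (geomsum c t).
Proof.
move=> c0; have [N] := ubnP (s + t); elim: N s t => // N IH s t st gst.
have [s0|s0] := posnP s.
  by move: gst; rewrite s0 gcd0n => ->; rewrite geomsum1; apply: comaximal1.
have [t0|t0] := posnP t.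
  move: gst; rewrite t0 gcdn0 => ->; rewrite geomsum1.
  exact/comaximal_sym/comaximal1.
wlog le_st : s t st gst s0 t0 / (s <= t)%N.
  move=> W; case: (leqP s t) => h; first exact: W.
  apply/comaximal_sym/W; rewrite 1?addnC 1?gcdnC //; exact: ltnW.
have [r er] : exists r, t = (s + r)%N by exists (t - s)%N; rewrite subnKC.
subst t; rewrite gcdnDl in gst.
have [u [v h]] : comaximal (geomsum c s) (geomsum c r) by apply: IH => //; lia.
by exists (u - v * 'X^(c * r)), v; rewrite geomsumD // -h; ring.
Qed.

Lemma geomsum_aprod c s M : (0 < c)%N -> (0 < s)%N -> (c * s < M)%N ->
  geomsum c s = aprod M (fun m => dvdexp (c * s) m - dvdexp c m)%N.
Proof.
move=> c0 s0 csM.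
have cM : (c < M)%N by apply: leq_ltn_trans csM; rewrite leq_pmulr.
apply: (mulfI (Xn_sub1_neq0 c0)); rewrite -geomsumE.
rewrite (@Xn_sub1_aprod M) ?muln_gt0 ?c0 // (@Xn_sub1_aprod M c) //.
apply: aprod_split => m _; rewrite /dvdexp; case: (0 < m)%N => //=.
by case hm: (m %| c)%N => //=; rewrite dvdn_mulr.
Qed.

(* With c = gcd(n, b), Phi_a divides
   geomsum c (n/c) and Phi_b divides geomsum c (b/c), whose lengths are coprime. *)
Lemma comaximal_atoms n a b : (0 < n)%N -> (0 < b)%N -> (b < a)%N ->
  (a %| n)%N -> ~~ (b %| n)%N -> comaximal (atom a) (atom b).
Proof.
move=> n0 b0 ba an bn.
set c := gcdn n b; have c0 : (0 < c)%N by rewrite gcdn_gt0 n0.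
have cn : (c %| n)%N by apply: dvdn_gcdl.
set s := (n %/ c)%N; set t := (b %/ c)%N.
have ns : n = (c * s)%N by rewrite mulnC divnK.
have bt : b = (c * t)%N by rewrite mulnC divnK ?dvdn_gcdr.
have gst : gcdn s t = 1%N.
  by apply/eqP; rewrite -(eqn_pmul2l c0) muln_gcdr -ns -bt muln1.
have s0 : (0 < s)%N by move: n0; rewrite ns muln_gt0 => /andP[].
have t0 : (0 < t)%N by move: b0; rewrite bt muln_gt0 => /andP[].
set M := (n + b).+1.
have nM : (n < M)%N by rewrite ltnS leq_addr.
have bM : (b < M)%N by rewrite ltnS leq_addl.
have a0 : (0 < a)%N by apply: leq_ltn_trans ba.
have hs := @geomsum_aprod c s M c0 s0; rewrite -ns in hs.
have ht := @geomsum_aprod c t M c0 t0; rewrite -bt in ht.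
have [r1 e1] : exists r, geomsum c s = atom a * r.
  rewrite (hs nM); apply: aprod_factor; first exact: leq_ltn_trans (dvdn_leq n0 an) nM.
  rewrite /dvdexp a0 an /=; case ac: (a %| c)%N => //.
  by have := dvdn_leq c0 ac; have := dvdn_leq b0 (dvdn_gcdr n b); lia.
have [r2 e2] : exists r, geomsum c t = atom b * r.
  rewrite (ht bM); apply: aprod_factor => //; rewrite /dvdexp b0 dvdnn /=.
  by case bc: (b %| c)%N => //; move: bn; rewrite (dvdn_trans bc cn).
have h := comaximal_geomsum c s t c0 gst.
exact/comaximal_sym/(comaximal_dvdl (comaximal_sym (comaximal_dvdl h e1)) e2).
Qed.

(* Identities behind the ideal equality (a, b) = (c) when a = c A, b = c B w
   with w a unit and A, B comaximal. *)
Lemma lincomb_factor {R : comPzRingType} {y z a b c A B w : R} :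
  a = c * A -> b = c * B * w -> y * a + z * b = (y * A + z * w * B) * c.
Proof. by move=> -> ->; ring. Qed.

Lemma multiple_lincomb {R : comPzRingType} {x v a b c A B w w' al be : R} :
  a = c * A -> b = c * B * w -> w * w' = 1 -> al * A + be * B = 1 ->
  x = v * c -> x = (v * al) * a + (v * be * w') * b.
Proof.
move=> -> -> hw hab ->.
by rewrite -[LHS]mulr1 -hab -[be * B]mulr1 -hw; ring.
Qed.

Lemma ideal2_eq_of_comaximal {a b c w w' : laurent} {A B : {poly int}} :
  lfrac a = lfrac c * A%:F -> lfrac b = lfrac c * B%:F * lfrac w ->
  lfrac w * lfrac w' = 1 -> comaximal A B -> ideal2_eq_principal a b c.
Proof.
move=> ha hb hw [al [be hab]] x; split.
  move=> [y [z /leqL_lfrac]]; rewrite lfrac_add !lfrac_mul.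
  rewrite (lincomb_factor ha hb) => hx.
  exists (ladd (lmul y (lpoly A)) (lmul (lmul z w) (lpoly B))).
  by apply/leqL_lfrac; rewrite hx lfrac_mul lfrac_add !lfrac_mul !lfrac_lpoly.
move=> [v /leqL_lfrac]; rewrite lfrac_mul => hx.
have habF : al%:F * A%:F + be%:F * B%:F = 1 :> Lfrac.
  by rewrite -!tofracM -tofracD hab tofrac1.
exists (lmul v (lpoly al)), (lmul (lmul v (lpoly be)) w').
apply/leqL_lfrac; rewrite lfrac_add !lfrac_mul !lfrac_lpoly.
exact: multiple_lincomb ha hb hw habF hx.
Qed.

Lemma divnD3_le x y m : (0 < m)%N -> ((x + y + 1) %/ m <= x %/ m + y %/ m + 1)%N.
Proof.
move=> m0; have := divn_eq x m; have := divn_eq y m; have := divn_eq (x + y + 1) m.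
have := ltn_pmod x m0; have := ltn_pmod y m0; have := ltn_pmod (x + y + 1) m0.
nia.
Qed.

Lemma divn_subn_self k m : (0 < m)%N -> (m <= k)%N -> ((k - m) %/ m = k %/ m - 1)%N.
Proof.
move=> m0 mk; have e : k = ((k - m) + 1 * m)%N by rewrite mul1n subnK.
by rewrite {2}e divnDMl // addnK.
Qed.

(* Exponent bookkeeping for fixed 1 <= k <= l, with n = l - k + 1 and K = k - 1.
   For m | n the exponent of Phi_m in the gcd is floor(k/m) - 1 (if m <= k), while
   in {K}_q! it is floor(K/m). *)
Section Exponents.
Variables l k : nat.
Hypotheses (hk1 : (1 <= k)%N) (hkl : (k <= l)%N).
Local Notation n := (l - k).+1.
Local Notation K := k.-1.
Local Notation E := (hexp l K).
Local Notation mu := (minexp E K).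
Local Notation nu := (E K).

Lemma l_eq_nK : l = (n + K)%N.
Proof. lia. Qed.

Lemma nu_div m : (0 < m)%N -> nu m = (K %/ m)%N.
Proof. by move=> m0; rewrite /hexp subnn big_ord0 add0n sum_dvdexp. Qed.

Lemma divn_k m : (0 < m)%N -> (k %/ m = dvdexp k m + K %/ m)%N.
Proof.
move=> m0; have ek : k = K.+1 by lia.
by rewrite {1}ek divnS // /dvdexp m0 -ek.
Qed.

(* The term i = m - 1 bounds the minimal exponent by floor(k/m) - 1 ... *)
Lemma mu_upper m : (0 < m)%N -> (m %| n)%N -> (m <= k)%N -> (mu m <= k %/ m - 1)%N.
Proof.
move=> m0 mn mk; have := minexp_le E K m.-1 m.
rewrite (@hexp_dvd l K m.-1 m n m0 mn l_eq_nK); last by lia.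
have -> : (K - m.-1 = k - m)%N by lia.
rewrite divn_subn_self // (@divn_small m.-1 m) ?addn0; last by lia.
by apply; lia.
Qed.

Lemma mu_lower m : (0 < m)%N -> (m %| n)%N -> (k %/ m - 1 <= mu m)%N.
Proof.
move=> m0 mn; apply: minexp_ge => i iK.
rewrite (@hexp_dvd l K i m n m0 mn l_eq_nK iK).
have := divnD3_le (K - i) i m m0.
have -> : (K - i + i + 1 = k)%N by lia.
by move: (k %/ m)%N ((K - i) %/ m)%N (i %/ m)%N => a b c; lia.
Qed.

(* Exponents of {n}_q / gtilde and of {k}_q ({K}_q! / gcd) / gtilde. *)
Definition Aexp (m : nat) : nat := (dvdexp n m - gexp k n m)%N.
Definition Bexp (m : nat) : nat := ((dvdexp k m + (nu m - mu m)) - gexp k n m)%N.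

Lemma gexp_le_dvdexp m : (gexp k n m <= dvdexp n m)%N.
Proof. by rewrite /gexp /dvdexp; case: m => [|m] //=; case: (m.+1 <= k)%N. Qed.

Lemma gexp_le_Bsum m : (gexp k n m <= dvdexp k m + (nu m - mu m))%N.
Proof.
rewrite /gexp; case h: [&& (0 < m), (m <= k) & (m %| n)]%N => //.
move/and3P: h => [m0 mk mn].
have := divn_k m m0; have := nu_div m m0; have := mu_upper m m0 mn mk.
have : (0 < k %/ m)%N by rewrite divn_gt0.
by move: (k %/ m)%N (K %/ m)%N (mu m) (nu m) => a b c d; lia.
Qed.

Lemma Aexp_pos a : (0 < Aexp a)%N -> [/\ (0 < a)%N, (a %| n)%N & (k < a)%N].
Proof.
rewrite /Aexp /gexp /dvdexp.
case: (0 < a)%N => //=; case: (a %| n)%N => //=; rewrite andbT.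
by case: (leqP a k).
Qed.

Lemma Bexp_pos b : (0 < Bexp b)%N -> [/\ (0 < b)%N, (b <= k)%N & ~~ (b %| n)%N].
Proof.
rewrite /Bexp => h.
have b0 : (0 < b)%N by move: h; case: b => //; rewrite /dvdexp hexp0.
have bk : (b <= k)%N.
  case: leqP => // kb; move: h.
  rewrite (nu_div b b0) divn_small; last lia.
  have -> : dvdexp k b = 0%N.
    rewrite /dvdexp; case kd: (b %| k)%N; rewrite ?andbF //.
    by have := dvdn_leq hk1 kd; lia.
  by rewrite sub0n.
split=> //; apply/negP => bn; move: h.
have -> : gexp k n b = 1%N by rewrite /gexp b0 bk bn.
have := divn_k b b0; have := nu_div b b0; have := mu_lower b b0 bn.
have : (dvdexp k b <= 1)%N by rewrite /dvdexp; case: (_ && _).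
by move: (k %/ b)%N (K %/ b)%N (mu b) (nu b) (dvdexp k b) => a c d e f; lia.
Qed.

Definition qfact_cofactor : {poly int} := aprod l.+1 (fun m => nu m - mu m)%N.

Lemma qfact_factor : qfact K = hgcd l K * qfact_cofactor.
Proof.
have Kl : (K <= l)%N by lia.
rewrite -(hqK l K) hq_aprod // (@aprod_split _ mu nu) // => m _.
exact: minexp_le.
Qed.

Lemma qnum_n_factor : qnum n = gtilde l k * aprod l.+1 Aexp.
Proof.
have nl : (n < l.+1)%N by lia.
rewrite gtilde_aprod // /qnum (@Xn_sub1_aprod l.+1 n) //.
by rewrite (@aprod_split _ (gexp k n) (dvdexp n)) // => m _; apply: gexp_le_dvdexp.
Qed.

Lemma qnum_k_factor : qnum k * qfact_cofactor = gtilde l k * aprod l.+1 Bexp.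
Proof.
rewrite gtilde_aprod // /qnum /qfact_cofactor (@Xn_sub1_aprod l.+1 k) // -aprod_add.
by rewrite [LHS](@aprod_split _ (gexp k n)) // => m _; apply: gexp_le_Bsum.
Qed.

Lemma comaximal_Aprod_Bprod : comaximal (aprod l.+1 Aexp) (aprod l.+1 Bexp).
Proof.
apply: comaximal_aprod => a b ha hb.
have [a0 an ka] := Aexp_pos a ha; have [b0 bk bn] := Bexp_pos b hb.
exact: (@comaximal_atoms n a b) (leq_ltn_trans bk ka) an bn.
Qed.

End Exponents.

(* Any gcd g is u * hgcd for a unit u of Z[q,q^-1]; then f = {K}_q!/g equals
   qfact_cofactor * u^-1, and ideal2_eq_of_comaximal applies with the
   factorizations of {n}_q and {k}_q * qfact_cofactor. *)
Theorem lemma4p4 (l k : nat) (hk1 : (1 <= k)%N) (hkl : (k <= l)%N) :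
  (exists g : laurent, lgcd (fun i => lpoly (hq l k.-1 i)) k.-1 g) /\
  (forall g : laurent, lgcd (fun i => lpoly (hq l k.-1 i)) k.-1 g ->
     ldvd g (lpoly (qfact k.-1)) /\
     (forall f : laurent, leqL (lmul f g) (lpoly (qfact k.-1)) ->
        ideal2_eq_principal (lpoly (qnum (l - k).+1))
                            (lmul (lpoly (qnum k)) f)
                            (lpoly (gtilde l k)))).
Proof.
set G := hgcd l k.-1.
have gcdG := hq_lgcd l k.-1 (leq_trans (leq_pred k) hkl).
split; first by exists (lpoly G).
move=> g hg; split; first by rewrite -(hqK l); apply: hg.1.
move=> f hf.
have G0 : G%:F != 0 :> Lfrac by rewrite tofrac_eq0 aprod_neq0.
have := lgcd_associates hg gcdG; rewrite !lfrac_lpoly => /(_ G0) [u [u' [hgu huu]]].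
have hfT : lfrac f = (qfact_cofactor l k)%:F * lfrac u'.
  move/leqL_lfrac: hf; rewrite lfrac_mul hgu lfrac_lpoly (qfact_factor l k hk1 hkl).
  rewrite tofracM mulrA [RHS]mulrC => /(mulIf G0) hfu.
  by rewrite -hfu -mulrA huu mulr1.
apply: (ideal2_eq_of_comaximal _ _ (etrans (mulrC _ _) huu) (comaximal_Aprod_Bprod l k hk1 hkl)).
  by rewrite !lfrac_lpoly (qnum_n_factor l k hk1 hkl) tofracM.
have := congr1 (fun p => p%:F : Lfrac) (qnum_k_factor l k hk1 hkl).
by rewrite /= !tofracM lfrac_mul hfT !lfrac_lpoly mulrA => ->.
Qed.
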